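(* Let $M$ be a $\lambda$-term. (1) (CbN) If $M\to_\beta M'$ then $M^n\to_v M'^n$ (hence $M^n\to_b M'^n$). Conversely, if $M^n\to_b S$ then $M^n\to_v S$, and there is a $\lambda$-term $M'$ with $S=M'^n$ and $M\to_\beta M'$. (2) (Ground CbN) If $M\to_{w\beta} M'$ then $M^n\to_{wv} M'^n$ (hence $M^n\to_{wb} M'^n$). Conversely, if $M^n\to_{wb} S$ then $M^n\to_{wv} S$, and there is a $\lambda$-term $M'$ with $S=M'^n$ and $M\to_{w\beta} M'$. (3) (CbV) If $M\to_{\beta_v} M'$ then there is $S_0$ with $M^v\to_d S_0\to_v M'^v$ (hence $M^v\to_b\to_b M'^v$). Conversely, if $M^v\to_d S_0\to_v S$ for some $S_0,S$, then there is a $\lambda$-term $M'$ with $S=M'^v$ and $M\to_{\beta_v}M'$. (4) (Ground CbV) If $M\to_{w\beta_v} M'$ then there is $S_0$ with $M^v\to_{wd} S_0\to_{wv} M'^v$ (hence $M^v\to_{wb}\to_{wb} M'^v$). Conversely, if $M^v\to_{wd} S_0\to_{wv} S$ for some $S_0,S$, then there is a $\lambda$-term $M'$ with $S=M'^v$ and $M\to_{w\beta_v}M'$.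
   Context: Bang calculus. Fix a countably infinite set of variables. The set $!\Lambda$ of terms is $T,S,R ::= x \mid \lambda x.T \mid T\,S \mid \mathrm{der}\,T \mid\ !T$ (variable, abstraction, application, dereliction, box); $\lambda$ is the only binder, terms are taken up to $\alpha$-conversion, and $T\{S/x\}$ is capture-avoiding substitution (so $(!T)\{S/x\}=\,!(T\{S/x\})$). Contexts: $C ::= [\cdot] \mid \lambda x.C \mid C\,T \mid T\,C \mid \mathrm{der}\,C \mid\ !C$; ground contexts: $W ::= [\cdot] \mid \lambda x.W \mid W\,T \mid T\,W \mid \mathrm{der}\,W$. Root steps: $(\lambda x.T)(!S)\mapsto_v T\{S/x\}$, $\mathrm{der}(!T)\mapsto_d T$, and $\mapsto_b\,=\,\mapsto_v\cup\mapsto_d$. For $r\in\{v,d,b\}$, $T\to_r S$ iff $T=C[T']$, $S=C[S']$ for some context $C$ and $T'\mapsto_r S'$; $T\to_{wr}S$ is defined in the same way but with ground contexts $W$ only. $\lambda$-calculus. $\lambda$-terms: $M,N ::= V \mid M\,N$, values $V ::= x \mid \lambda x.M$. $\lambda$-contexts $C ::= [\cdot]\mid \lambda x.C\mid C\,M\mid M\,C$; CbN ground contexts $N ::= [\cdot]\mid\lambda x.N\mid N\,M$; CbV ground contexts $V ::= [\cdot]\mid V\,M\mid M\,V$. Root steps $(\lambda x.M)N\mapsto_\beta M\{N/x\}$ and $(\lambda x.M)V\mapsto_{\beta_v} M\{V/x\}$ for $V$ a value. $\to_\beta,\to_{\beta_v}$ are closures of these under $\lambda$-contexts; $\to_{w\beta}$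 is the closure of $\mapsto_\beta$ under CbN ground contexts; $\to_{w\beta_v}$ is the closure of $\mapsto_{\beta_v}$ under CbV ground contexts. Translations $\Lambda\to\,!\Lambda$: CbN: $x^n=x$, $(\lambda x.M)^n=\lambda x.M^n$, $(MN)^n=M^n\,(!N^n)$. CbV: $x^v=\,!x$, $(\lambda x.M)^v=\,!(\lambda x.M^v)$, $(MN)^v=(\mathrm{der}\,M^v)\,N^v$. *)

(* Terms up to alpha-conversion are represented with de Bruijn indices. *)
From Stdlib Require Import Arith.

Inductive bterm : Type :=
| BVar : nat -> bterm
| BLam : bterm -> bterm
| BApp : bterm -> bterm -> bterm
| BDer : bterm -> bterm
| BBox : bterm -> bterm.

Fixpoint blift (k : nat) (t : bterm) : bterm :=
  match t with
  | BVar n => if n <? k then BVar n else BVar (S n)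
  | BLam t => BLam (blift (S k) t)
  | BApp t s => BApp (blift k t) (blift k s)
  | BDer t => BDer (blift k t)
  | BBox t => BBox (blift k t)
  end.

Fixpoint bsubst (k : nat) (s : bterm) (t : bterm) : bterm :=
  match t with
  | BVar n => if n =? k then s else if n <? k then BVar n else BVar (pred n)
  | BLam t => BLam (bsubst (S k) (blift 0 s) t)
  | BApp t1 t2 => BApp (bsubst k s t1) (bsubst k s t2)
  | BDer t => BDer (bsubst k s t)
  | BBox t => BBox (bsubst k s t)
  end.

Inductive bctx : Type :=
| BHole : bctx
| BCLam : bctx -> bctx
| BCAppL : bctx -> bterm -> bctx
| BCAppR : bterm -> bctx -> bctx
| BCDer : bctx -> bctx
| BCBox : bctx -> bctx.

Fixpoint bplug (C : bctx) (t : bterm) : bterm :=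
  match C with
  | BHole => t
  | BCLam C => BLam (bplug C t)
  | BCAppL C s => BApp (bplug C t) s
  | BCAppR s C => BApp s (bplug C t)
  | BCDer C => BDer (bplug C t)
  | BCBox C => BBox (bplug C t)
  end.

Fixpoint bground (C : bctx) : Prop :=
  match C with
  | BHole => True
  | BCLam C => bground C
  | BCAppL C _ => bground C
  | BCAppR _ C => bground C
  | BCDer C => bground C
  | BCBox _ => False
  end.

Inductive root_v : bterm -> bterm -> Prop :=
| root_v_intro : forall T S, root_v (BApp (BLam T) (BBox S)) (bsubst 0 S T).
Inductive root_d : bterm -> bterm -> Prop :=
| root_d_intro : forall T, root_d (BDer (BBox T)) T.
Definition root_b (T S : bterm) : Prop := root_v T S \/ root_d T S.

Definition bstep (r : bterm -> bterm -> Prop) (T S : bterm) : Prop :=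
  exists C T' S', T = bplug C T' /\ S = bplug C S' /\ r T' S'.
Definition wbstep (r : bterm -> bterm -> Prop) (T S : bterm) : Prop :=
  exists C T' S', bground C /\ T = bplug C T' /\ S = bplug C S' /\ r T' S'.

Definition step_v := bstep root_v.
Definition step_d := bstep root_d.
Definition step_b := bstep root_b.
Definition step_wv := wbstep root_v.
Definition step_wd := wbstep root_d.
Definition step_wb := wbstep root_b.

Inductive lterm : Type :=
| Var : nat -> lterm
| Lam : lterm -> lterm
| App : lterm -> lterm -> lterm.

Fixpoint llift (k : nat) (t : lterm) : lterm :=
  match t with
  | Var n => if n <? k then Var n else Var (S n)
  | Lam t => Lam (llift (S k) t)
  | App t s => App (llift k t) (llift k s)
  end.

Fixpoint lsubst (k : nat) (s : lterm) (t : lterm) : lterm :=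
  match t with
  | Var n => if n =? k then s else if n <? k then Var n else Var (pred n)
  | Lam t => Lam (lsubst (S k) (llift 0 s) t)
  | App t1 t2 => App (lsubst k s t1) (lsubst k s t2)
  end.

Definition is_value (t : lterm) : Prop :=
  match t with Var _ | Lam _ => True | App _ _ => False end.

Inductive lctx : Type :=
| LHole : lctx
| LCLam : lctx -> lctx
| LCAppL : lctx -> lterm -> lctx
| LCAppR : lterm -> lctx -> lctx.

Fixpoint lplug (C : lctx) (t : lterm) : lterm :=
  match C with
  | LHole => t
  | LCLam C => Lam (lplug C t)
  | LCAppL C s => App (lplug C t) s
  | LCAppR s C => App s (lplug C t)
  end.

Fixpoint cbn_ground (C : lctx) : Prop :=
  match C with
  | LHole => True
  | LCLam C => cbn_ground C
  | LCAppL C _ => cbn_ground C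
  | LCAppR _ _ => False
  end.

Fixpoint cbv_ground (C : lctx) : Prop :=
  match C with
  | LHole => True
  | LCLam _ => False
  | LCAppL C _ => cbv_ground C
  | LCAppR _ C => cbv_ground C
  end.

Inductive root_beta : lterm -> lterm -> Prop :=
| root_beta_intro : forall M N, root_beta (App (Lam M) N) (lsubst 0 N M).
Inductive root_betav : lterm -> lterm -> Prop :=
| root_betav_intro : forall M V, is_value V -> root_betav (App (Lam M) V) (lsubst 0 V M).

Definition step_beta (M N : lterm) : Prop :=
  exists C M' N', M = lplug C M' /\ N = lplug C N' /\ root_beta M' N'.
Definition step_betav (M N : lterm) : Prop :=
  exists C M' N', M = lplug C M' /\ N = lplug C N' /\ root_betav M' N'.
Definition step_wbeta (M N : lterm) : Prop :=
  exists C M' N', cbn_ground C /\ M = lplug C M' /\ N = lplug C N' /\ root_beta M' N'.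
Definition step_wbetav (M N : lterm) : Prop :=
  exists C M' N', cbv_ground C /\ M = lplug C M' /\ N = lplug C N' /\ root_betav M' N'.

Fixpoint cbn (t : lterm) : bterm :=
  match t with
  | Var n => BVar n
  | Lam M => BLam (cbn M)
  | App M N => BApp (cbn M) (BBox (cbn N))
  end.

Fixpoint cbv (t : lterm) : bterm :=
  match t with
  | Var n => BBox (BVar n)
  | Lam M => BBox (BLam (cbv M))
  | App M N => BApp (BDer (cbv M)) (cbv N)
  end.

(* Both translations commute with plugging into contexts and with
   substitution, so a beta-redex is simulated by one v-step at the translated
   position, and a beta_v-redex (\x.P) V by a d-step opening the box of \x.P
   followed by the v-step on (\x.P^v) V^v.  Conversely, the only subterms of
   M^n that are not translations of subterms of M are boxed arguments, hence
   every b-redex of M^n is the translation of a beta-redex.  The term M^v has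
   no v-redex at all; its d-redexes are the translations of applications with
   a value in function position, and after such a d-step the only v-redex is
   the one it has just created, which is the translation of a beta_v-redex. *)

From Stdlib Require Import Arith.

Fixpoint bcomp (C D : bctx) : bctx :=
  match C with
  | BHole => D
  | BCLam C => BCLam (bcomp C D)
  | BCAppL C s => BCAppL (bcomp C D) s
  | BCAppR s C => BCAppR s (bcomp C D)
  | BCDer C => BCDer (bcomp C D)
  | BCBox C => BCBox (bcomp C D)
  end.

Lemma bplug_comp C D t : bplug (bcomp C D) t = bplug C (bplug D t).
Proof. induction C; simpl; congruence. Qed.

Lemma bcomp_hole_r C : bcomp C BHole = C.
Proof. induction C; simpl; congruence. Qed.

Lemma bground_comp C D : bground C -> bground D -> bground (bcomp C D).
Proof. induction C; simpl; tauto. Qed.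

Lemma bstep_mono (r r' : bterm -> bterm -> Prop) :
  (forall T S, r T S -> r' T S) -> forall T S, bstep r T S -> bstep r' T S.
Proof. intros Hr T S (C & T' & S' & -> & -> & R). exists C, T', S'. auto. Qed.

Lemma wbstep_mono (r r' : bterm -> bterm -> Prop) :
  (forall T S, r T S -> r' T S) -> forall T S, wbstep r T S -> wbstep r' T S.
Proof. intros Hr T S (C & T' & S' & G & -> & -> & R). exists C, T', S'. auto. Qed.

Lemma step_v_b T S : step_v T S -> step_b T S.
Proof. apply bstep_mono. now left. Qed.

Lemma step_d_b T S : step_d T S -> step_b T S.
Proof. apply bstep_mono. now right. Qed.

Lemma step_wv_wb T S : step_wv T S -> step_wb T S.
Proof. apply wbstep_mono. now left. Qed.

Lemma step_wd_wb T S : step_wd T S -> step_wb T S.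
Proof. apply wbstep_mono. now right. Qed.

Fixpoint cbn_ctx (C : lctx) : bctx :=
  match C with
  | LHole => BHole
  | LCLam C => BCLam (cbn_ctx C)
  | LCAppL C N => BCAppL (cbn_ctx C) (BBox (cbn N))
  | LCAppR M C => BCAppR (cbn M) (BCBox (cbn_ctx C))
  end.

Fixpoint cbv_ctx (C : lctx) : bctx :=
  match C with
  | LHole => BHole
  | LCLam C => BCBox (BCLam (cbv_ctx C))
  | LCAppL C N => BCAppL (BCDer (cbv_ctx C)) (cbv N)
  | LCAppR M C => BCAppR (BDer (cbv M)) (cbv_ctx C)
  end.

Lemma cbn_plug C M : cbn (lplug C M) = bplug (cbn_ctx C) (cbn M).
Proof. induction C; simpl; congruence. Qed.

Lemma cbv_plug C M : cbv (lplug C M) = bplug (cbv_ctx C) (cbv M).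
Proof. induction C; simpl; congruence. Qed.

Lemma bground_cbn_ctx C : bground (cbn_ctx C) <-> cbn_ground C.
Proof. induction C; simpl; tauto. Qed.

Lemma bground_cbv_ctx C : bground (cbv_ctx C) <-> cbv_ground C.
Proof. induction C; simpl; tauto. Qed.

Lemma cbn_lift M k : cbn (llift k M) = blift k (cbn M).
Proof.
  revert k; induction M as [n|M IH|M1 IH1 M2 IH2]; intros k; simpl.
  - now destruct (n <? k).
  - now rewrite IH.
  - now rewrite IH1, IH2.
Qed.

Lemma cbv_lift M k : cbv (llift k M) = blift k (cbv M).
Proof.
  revert k; induction M as [n|M IH|M1 IH1 M2 IH2]; intros k; simpl.
  - now destruct (n <? k).
  - now rewrite IH.
  - now rewrite IH1, IH2.
Qed.

Lemma cbn_subst M N k : cbn (lsubst k N M) = bsubst k (cbn N) (cbn M).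
Proof.
  revert N k; induction M as [n|M IH|M1 IH1 M2 IH2]; intros N k; simpl.
  - now destruct (n =? k), (n <? k).
  - now rewrite IH, cbn_lift.
  - now rewrite IH1, IH2.
Qed.

(* Junk value on applications, which are not values. *)
Definition cbv_val (V : lterm) : bterm :=
  match V with
  | Var n => BVar n
  | Lam P => BLam (cbv P)
  | App _ _ => BVar 0
  end.

Lemma cbv_value V : is_value V -> cbv V = BBox (cbv_val V).
Proof. now destruct V. Qed.

Lemma cbv_box_inv M U : cbv M = BBox U -> is_value M /\ U = cbv_val M.
Proof. destruct M; simpl; intros E; try discriminate; now injection E as <-. Qed.

Lemma value_lift V k : is_value V -> is_value (llift k V).
Proof. destruct V as [n| |]; simpl; try tauto. now destruct (n <? k). Qed.

Lemma cbv_val_lift V k : is_value V -> cbv_val (llift k V) = blift k (cbv_val V).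
Proof.
  destruct V as [n|P|]; simpl; try tauto.
  - now destruct (n <? k).
  - now rewrite cbv_lift.
Qed.

Lemma cbv_subst M V k : is_value V -> cbv (lsubst k V M) = bsubst k (cbv_val V) (cbv M).
Proof.
  revert V k; induction M as [n|M IH|M1 IH1 M2 IH2]; intros V k HV; simpl.
  - destruct (n =? k); [now apply cbv_value|]. now destruct (n <? k).
  - now rewrite IH, cbv_val_lift by auto using value_lift.
  - now rewrite IH1, IH2.
Qed.

Lemma root_beta_cbn M M' : root_beta M M' -> root_v (cbn M) (cbn M').
Proof. intros [P N]. simpl. rewrite cbn_subst. constructor. Qed.

Lemma root_betav_cbv P V :
  is_value V -> root_v (BApp (BLam (cbv P)) (cbv V)) (cbv (lsubst 0 V P)).
Proof. intros HV. rewrite (cbv_value V HV), cbv_subst by exact HV. constructor. Qed.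

Lemma step_beta_cbn M M' : step_beta M M' -> step_v (cbn M) (cbn M').
Proof.
  intros (C & M1 & M1' & -> & -> & R).
  exists (cbn_ctx C), (cbn M1), (cbn M1'). rewrite !cbn_plug. auto using root_beta_cbn.
Qed.

Lemma step_wbeta_cbn M M' : step_wbeta M M' -> step_wv (cbn M) (cbn M').
Proof.
  intros (C & M1 & M1' & G & -> & -> & R).
  exists (cbn_ctx C), (cbn M1), (cbn M1'). rewrite !cbn_plug.
  repeat split; auto using root_beta_cbn. now apply bground_cbn_ctx.
Qed.

Lemma step_betav_cbv M M' :
  step_betav M M' -> exists S0, step_d (cbv M) S0 /\ step_v S0 (cbv M').
Proof.
  intros (C & ? & ? & -> & -> & [P V HV]).
  exists (bplug (cbv_ctx C) (BApp (BLam (cbv P)) (cbv V))). rewrite !cbv_plug. split.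
  - exists (bcomp (cbv_ctx C) (BCAppL BHole (cbv V))), (BDer (BBox (BLam (cbv P)))), (BLam (cbv P)).
    rewrite !bplug_comp. repeat split.
  - exists (cbv_ctx C), (BApp (BLam (cbv P)) (cbv V)), (cbv (lsubst 0 V P)).
    auto using root_betav_cbv.
Qed.

Lemma step_wbetav_cbv M M' :
  step_wbetav M M' -> exists S0, step_wd (cbv M) S0 /\ step_wv S0 (cbv M').
Proof.
  intros (C & ? & ? & G & -> & -> & [P V HV]).
  apply bground_cbv_ctx in G.
  exists (bplug (cbv_ctx C) (BApp (BLam (cbv P)) (cbv V))). rewrite !cbv_plug. split.
  - exists (bcomp (cbv_ctx C) (BCAppL BHole (cbv V))), (BDer (BBox (BLam (cbv P)))), (BLam (cbv P)).
    rewrite !bplug_comp. repeat split. now apply bground_comp.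
  - exists (cbv_ctx C), (BApp (BLam (cbv P)) (cbv V)), (cbv (lsubst 0 V P)).
    auto using root_betav_cbv.
Qed.

(* Boxes are the only subterms of [cbn M] that are not translations of
   subterms of [M]. *)
Lemma cbn_plug_inv M C T : cbn M = bplug C T -> (forall U, T <> BBox U) ->
  exists LC M1, M = lplug LC M1 /\ C = cbn_ctx LC /\ T = cbn M1.
Proof.
  revert C; induction M as [n|M IH|M1 IH1 M2 IH2]; intros C E NB;
    destruct C; simpl in E; try discriminate.
  - subst T. now exists LHole, (Var n).
  - subst T. now exists LHole, (Lam M).
  - injection E as E. destruct (IH C E NB) as (LC & M1 & -> & -> & ->).
    now exists (LCLam LC), M1.
  - subst T. now exists LHole, (App M1 M2).
  - injection E as E <-. destruct (IH1 C E NB) as (LC & M0 & -> & -> & ->).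
    now exists (LCAppL LC M2), M0.
  - injection E as <- E. destruct C; simpl in E; try discriminate.
    + subst T. now destruct (NB (cbn M2)).
    + injection E as E. destruct (IH2 C E NB) as (LC & M0 & -> & -> & ->).
      now exists (LCAppR M1 LC), M0.
Qed.

Lemma root_b_cbn_inv M S : root_b (cbn M) S -> exists M', S = cbn M' /\ root_beta M M'.
Proof.
  intros [R | R]; remember (cbn M) as t eqn:E; destruct R.
  - destruct M as [| |[|P|] N]; try discriminate. simpl in E. injection E as -> ->.
    exists (lsubst 0 N P). split; [symmetry; apply cbn_subst | constructor].
  - destruct M; discriminate.
Qed.

Lemma cbn_redex_inv M C T S : cbn M = bplug C T -> root_b T S ->
  exists LC M1 M1', M = lplug LC M1 /\ C = cbn_ctx LC /\ S = cbn M1' /\ root_beta M1 M1'.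
Proof.
  intros E R.
  destruct (cbn_plug_inv M C T E) as (LC & M1 & -> & -> & ->).
  { intros U ->. destruct R as [R | R]; inversion R. }
  destruct (root_b_cbn_inv M1 S R) as (M1' & -> & R1).
  now exists LC, M1, M1'.
Qed.

Lemma step_b_cbn_inv M S : step_b (cbn M) S -> exists M', S = cbn M' /\ step_beta M M'.
Proof.
  intros (C & T & T' & E & -> & R).
  destruct (cbn_redex_inv M C T T' E R) as (LC & M1 & M1' & -> & -> & -> & R1).
  exists (lplug LC M1'). split.
  - symmetry. apply cbn_plug.
  - now exists LC, M1, M1'.
Qed.

Lemma step_wb_cbn_inv M S : step_wb (cbn M) S -> exists M', S = cbn M' /\ step_wbeta M M'.
Proof.
  intros (C & T & T' & G & E & -> & R).
  destruct (cbn_redex_inv M C T T' E R) as (LC & M1 & M1' & -> & -> & -> & R1).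
  exists (lplug LC M1'). split.
  - symmetry. apply cbn_plug.
  - exists LC, M1, M1'. repeat split; auto. now apply bground_cbn_ctx.
Qed.

Lemma cbv_v_normal M C T S : cbv M = bplug C T -> ~ root_v T S.
Proof.
  revert C; induction M as [n|P IH|M1 IH1 M2 IH2]; intros C E R;
    destruct C; simpl in E; try discriminate.
  - subst T. inversion R.
  - injection E as E. destruct C; simpl in E; try discriminate. subst T. inversion R.
  - subst T. inversion R.
  - injection E as E. destruct C; simpl in E; try discriminate.
    + subst T. inversion R.
    + injection E as E. exact (IH C E R).
  - subst T. inversion R.
  - injection E as E _. destruct C; simpl in E; try discriminate.
    + subst T. inversion R.
    + injection E as E. exact (IH1 C E R).
  - injection E as _ E. exact (IH2 C E R).
Qed.

Lemma cbv_plug_der_inv M C T : cbv M = bplug C (BDer T) ->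
  exists LC M1 N, M = lplug LC (App M1 N) /\
    C = bcomp (cbv_ctx LC) (BCAppL BHole (cbv N)) /\ T = cbv M1.
Proof.
  revert C; induction M as [n|P IH|M1 IH1 M2 IH2]; intros C E;
    destruct C; simpl in E; try discriminate.
  - injection E as E. destruct C; discriminate.
  - injection E as E. destruct C; simpl in E; try discriminate.
    injection E as E. destruct (IH C E) as (LC & V & N & -> & -> & ->).
    now exists (LCLam LC), V, N.
  - injection E as E <-. destruct C; simpl in E; try discriminate.
    + injection E as <-. now exists LHole, M1, M2.
    + injection E as E. destruct (IH1 C E) as (LC & V & N & -> & -> & ->).
      now exists (LCAppL LC M2), V, N.
  - injection E as <- E. destruct (IH2 C E) as (LC & V & N & -> & -> & ->).
    now exists (LCAppR M1 LC), V, N.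
Qed.

Lemma cbv_ctx_v_redex_inv LC X C T S : bplug (cbv_ctx LC) X = bplug C T -> root_v T S ->
  exists D, C = bcomp (cbv_ctx LC) D /\ X = bplug D T.
Proof.
  revert C; induction LC as [|LC IH|LC IH N|M LC IH]; intros C E R; simpl in E.
  - now exists C.
  - destruct C; simpl in E; try discriminate.
    + subst T. inversion R.
    + injection E as E. destruct C; simpl in E; try discriminate.
      * subst T. inversion R.
      * injection E as E. destruct (IH C E R) as (D & -> & ->). now exists D.
  - destruct C; simpl in E; try discriminate.
    + subst T. inversion R.
    + injection E as E <-. destruct C; simpl in E; try discriminate.
      * subst T. inversion R.
      * injection E as E. destruct (IH C E R) as (D & -> & ->). now exists D.
    + injection E as _ E. destruct (cbv_v_normal N C T S E R).
  - destruct C; simpl in E; try discriminate.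
    + subst T. inversion R.
    + injection E as E _. destruct C; simpl in E; try discriminate.
      * subst T. inversion R.
      * injection E as E. destruct (cbv_v_normal M C T S E R).
    + injection E as <- E. destruct (IH C E R) as (D & -> & ->). now exists D.
Qed.

Lemma cbv_val_v_normal V C T S : is_value V -> cbv_val V = bplug C T -> ~ root_v T S.
Proof.
  intros HV E. apply (cbv_v_normal V (BCBox C)). simpl. now rewrite <- E, cbv_value.
Qed.

Lemma cbv_app_val_v_redex_inv V N D T S : is_value V ->
  BApp (cbv_val V) (cbv N) = bplug D T -> root_v T S ->
  D = BHole /\ exists P, V = Lam P /\ is_value N /\ S = cbv (lsubst 0 N P).
Proof.
  intros HV E R. destruct D; simpl in E; try discriminate.
  - subst T. split; [reflexivity|].
    remember (BApp (cbv_val V) (cbv N)) as t eqn:Et. destruct R as [P U].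
    destruct V as [|P'|]; try discriminate.
    injection Et as -> EU. destruct (cbv_box_inv N U (eq_sym EU)) as [HN ->].
    exists P'. now rewrite cbv_subst.
  - injection E as E _. destruct (cbv_val_v_normal V D T S HV E R).
  - injection E as _ E. destruct (cbv_v_normal N D T S E R).
Qed.

Lemma cbv_dv_redex_inv M C T U C' T' S :
  cbv M = bplug C T -> root_d T U -> bplug C U = bplug C' T' -> root_v T' S ->
  exists LC P N, M = lplug LC (App (Lam P) N) /\ is_value N /\
    C' = cbv_ctx LC /\ S = cbv (lsubst 0 N P).
Proof.
  intros E Rd E' Rv. destruct Rd as [U].
  destruct (cbv_plug_der_inv M C (BBox U) E) as (LC & V & N & -> & -> & EV).
  destruct (cbv_box_inv V U (eq_sym EV)) as [HV ->].
  rewrite bplug_comp in E'. simpl in E'.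
  destruct (cbv_ctx_v_redex_inv LC _ C' T' S E' Rv) as (D & -> & ED).
  destruct (cbv_app_val_v_redex_inv V N D T' S HV ED Rv) as (-> & P & -> & HN & ->).
  exists LC, P, N. now rewrite bcomp_hole_r.
Qed.

Lemma step_dv_cbv_inv M S0 S : step_d (cbv M) S0 -> step_v S0 S ->
  exists M', S = cbv M' /\ step_betav M M'.
Proof.
  intros (C & T & U & E & -> & Rd) (C' & T' & S' & E' & -> & Rv).
  destruct (cbv_dv_redex_inv M C T U C' T' S' E Rd E' Rv) as (LC & P & N & -> & HN & -> & ->).
  exists (lplug LC (lsubst 0 N P)). split.
  - symmetry. apply cbv_plug.
  - exists LC, (App (Lam P) N), (lsubst 0 N P). repeat split. exact HN.
Qed.

Lemma step_wdv_cbv_inv M S0 S : step_wd (cbv M) S0 -> step_wv S0 S ->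
  exists M', S = cbv M' /\ step_wbetav M M'.
Proof.
  intros (C & T & U & _ & E & -> & Rd) (C' & T' & S' & G & E' & -> & Rv).
  destruct (cbv_dv_redex_inv M C T U C' T' S' E Rd E' Rv) as (LC & P & N & -> & HN & -> & ->).
  exists (lplug LC (lsubst 0 N P)). split.
  - symmetry. apply cbv_plug.
  - exists LC, (App (Lam P) N), (lsubst 0 N P). repeat split.
    + now apply bground_cbv_ctx.
    + exact HN.
Qed.

Theorem mainTheorem1 : forall M : lterm,
  (* (1) CbN *)
  ((forall M', step_beta M M' -> step_v (cbn M) (cbn M') /\ step_b (cbn M) (cbn M')) /\
   (forall S, step_b (cbn M) S ->
      step_v (cbn M) S /\ exists M', S = cbn M' /\ step_beta M M')) /\
  (* (2) ground CbN *)
  ((forall M', step_wbeta M M' -> step_wv (cbn M) (cbn M') /\ step_wb (cbn M) (cbn M')) /\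
   (forall S, step_wb (cbn M) S ->
      step_wv (cbn M) S /\ exists M', S = cbn M' /\ step_wbeta M M')) /\
  (* (3) CbV *)
  ((forall M', step_betav M M' ->
      (exists S0, step_d (cbv M) S0 /\ step_v S0 (cbv M')) /\
      (exists S0, step_b (cbv M) S0 /\ step_b S0 (cbv M'))) /\
   (forall S0 S, step_d (cbv M) S0 -> step_v S0 S ->
      exists M', S = cbv M' /\ step_betav M M')) /\
  (* (4) ground CbV *)
  ((forall M', step_wbetav M M' ->
      (exists S0, step_wd (cbv M) S0 /\ step_wv S0 (cbv M')) /\
      (exists S0, step_wb (cbv M) S0 /\ step_wb S0 (cbv M'))) /\
   (forall S0 S, step_wd (cbv M) S0 -> step_wv S0 S ->
      exists M', S = cbv M' /\ step_wbetav M M')).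
Proof.
  intro M. split; [|split; [|split]]; split.
  - intros M' H. auto using step_beta_cbn, step_v_b.
  - intros S H. destruct (step_b_cbn_inv M S H) as (M' & -> & H').
    split; [apply step_beta_cbn | exists M']; auto.
  - intros M' H. auto using step_wbeta_cbn, step_wv_wb.
  - intros S H. destruct (step_wb_cbn_inv M S H) as (M' & -> & H').
    split; [apply step_wbeta_cbn | exists M']; auto.
  - intros M' H. destruct (step_betav_cbv M M' H) as (S0 & Hd & Hv).
    split; exists S0; auto using step_d_b, step_v_b.
  - apply step_dv_cbv_inv.
  - intros M' H. destruct (step_wbetav_cbv M M' H) as (S0 & Hd & Hv).
    split; exists S0; auto using step_wd_wb, step_wv_wb.
  - apply step_wdv_cbv_inv.
Qed.
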